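(* If a nonempty set of candidates start the leader election algorithm, then the algorithm eventually terminates and exactly one candidate is known as the leader.
   Context: A broadcast network is modeled as a connected graph G(V,E) with n nodes; two nodes are joined by a (bidirectional) edge iff they hear each other's transmissions, and a transmitted message is heard by all neighbors of the sender. Messages arrive reliably, without errors, in FIFO order after arbitrary finite delay; there are no failures or topology changes; each node knows its number of neighbors. In the leader election algorithm the nodes are partitioned into fragments, each consisting of an active candidate node and its supporting nodes. Each fragment F has an identity id(F) = (id(F).size, id(F).identity) (its size and the candidate's identification number), ordered lexicographically: id(F1) > id(F2) iff id(F1).size > id(F2).size, or the sizes are equal and id(F1).identity > id(F2).identity. An edge is internal if it joins nodes of the same fragment and external otherwise; an external edge between F1 and F2 with id(F1) > id(F2) is directed from F1 to F2 (outgoing for F1, incoming for F2). Initially every node is a fragment of size 1 in state wait. The fragment-level (general) algorithm is: (1) a fragment enters (or stays in) state wait when it has at least one outgoing edge; (2) a fragment in wait moves to state work when all its external edges are incoming; in work it incurs a finite positive delay (workdelay) during which it counts its current number of nodes new_size and compares it to the size of its maximal neighbor fragment F': if new_size > X · id(F').size (X > 1 a parameter), it sets its size to new_size, all its external edges become outgoing, and it returns to wait; otherwise it ceases to exist and joins F' (its edges to F' become internal; F' keeps its size and identity); (3) a fragment with no external edges is in state leader. State transitions themselves take no time. *)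

From mathcomp Require Import all_boot all_order all_algebra.
Set Implicit Arguments. Unset Strict Implicit. Unset Printing Implicit Defensive.
Import Order.TTheory GRing.Theory Num.Theory.
Local Open Scope ring_scope.

Inductive fstate := FWait | FWork | FLeader.

(* A global configuration:
   - cand v   : the candidate node of the fragment containing v
                (v is a candidate iff cand v = v);
   - fsize c  : id(F).size of the fragment whose candidate is c
                (the recorded size, not necessarily the current node count);
   - fst c    : state of the fragment whose candidate is c.
   id(F).identity is the identification number idn c of its candidate c. *)
Record config (V : Type) := Config {
  cand : V -> V;
  fsize : V -> nat;
  fst : V -> fstate
}.

Section Algorithm.
Variables (V : finType) (adj : rel V) (idn : V -> nat).
Variables (R : realFieldType) (X : R).

Definition upd (T : Type) (f : V -> T) (c : V) (t : T) : V -> T :=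
  fun x => if x == c then t else f x.

Definition id_gt (C : config V) (a b : V) : bool :=
  (fsize C b < fsize C a)%N || ((fsize C a == fsize C b) && (idn b < idn a)%N).

Definition ext_of (C : config V) (c u v : V) : bool :=
  [&& cand C u == c, adj u v & cand C v != c].

Definition has_ext (C : config V) (c : V) : Prop := exists u v, ext_of C c u v.

Definition all_incoming (C : config V) (c : V) : Prop :=
  forall u v, ext_of C c u v -> id_gt C (cand C v) c.

Definition neighbor_frag (C : config V) (c d : V) : Prop :=
  exists u v, ext_of C c u v /\ cand C v = d.

Definition max_neighbor (C : config V) (c d : V) : Prop :=
  neighbor_frag C c d /\ forall e, neighbor_frag C c e -> e = d \/ id_gt C d e.

Definition frag_size (C : config V) (c : V) : nat := #|[pred v | cand C v == c]|.

(* The work phase,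
   which lasts a positive finite delay, is split into its start event and
   its end event (where new_size is counted and compared); arbitrary other
   events may be interleaved in between (asynchrony). *)
Inductive step (C : config V) : config V -> Prop :=
| StartWork c :
    cand C c = c -> fst C c = FWait -> has_ext C c -> all_incoming C c ->
    step C (Config (cand C) (fsize C) (upd (fst C) c FWork))
| BecomeLeader c :
    cand C c = c -> fst C c = FWait -> ~ has_ext C c ->
    step C (Config (cand C) (fsize C) (upd (fst C) c FLeader))
| FinishGrow c d :
    cand C c = c -> fst C c = FWork -> max_neighbor C c d ->
    X * (fsize C d)%:R < (frag_size C c)%:R ->
    step C (Config (cand C) (upd (fsize C) c (frag_size C c)) (upd (fst C) c FWait))
| FinishJoin c d :
    cand C c = c -> fst C c = FWork -> max_neighbor C c d ->
    ~ (X * (fsize C d)%:R < (frag_size C c)%:R) ->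
    step C (Config (fun v => if cand C v == c then d else cand C v)
                   (fsize C) (fst C)).

Definition init : config V := Config (fun v => v) (fun _ => 1%N) (fun _ => FWait).

Inductive reachable : config V -> Prop :=
| reach0 : reachable init
| reachS C C' : reachable C -> step C C' -> reachable C'.

Definition terminal (C : config V) : Prop := forall C', ~ step C C'.

End Algorithm.

From mathcomp Require Import all_boot all_order all_algebra.
From mathcomp Require Import zify.
Set Implicit Arguments. Unset Strict Implicit. Unset Printing Implicit Defensive.
Import Order.TTheory GRing.Theory Num.Theory.
Local Open Scope ring_scope.

(* Along any execution every working fragment has only incoming external edges;
   two working fragments are therefore never adjacent, so this survives the moves
   of the other fragments.  A fragment can only become leader when it has no
   external edge, i.e. when it is the whole graph, so a leader is unique.
   Every event strictly decreases the potential, summed over candidates, of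
   2 (n + 1 - size) plus 1 while waiting: a growing fragment regains the waiting
   bit but gains at least one in size, since its size was at most that of its
   maximal neighbour and X > 1.  Finally, if no event is possible, the candidate
   of least identity has all its external edges incoming, so it could start or
   finish working unless it is the leader. *)

Lemma no_infinite_descent (g : nat -> nat) : ~ (forall k, (g k.+1 < g k)%N).
Proof.
move=> g_dec; suff g_le k : (g k + k <= g 0)%N.
  by have := g_le (g 0).+1; rewrite addnS ltnNge leq_addl.
by elim: k => [|k IHk]; [rewrite addn0 | have := g_dec k; lia].
Qed.

Lemma sum_ltn (I : finType) (F G : I -> nat) (i0 : I) :
  (forall i, F i <= G i)%N -> (F i0 < G i0)%N -> (\sum_i F i < \sum_i G i)%N.
Proof.
move=> leFG ltFG0; rewrite (bigD1 i0) //= [ltnRHS](bigD1 i0) //=.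
by rewrite -addSn leq_add // leq_sum.
Qed.

Section Election.
Variables (V : finType) (adj : rel V) (idn : V -> nat).
Hypothesis adj_sym : symmetric adj.
Hypothesis adj_connected : forall x y : V, connect adj x y.
Hypothesis idn_inj : injective idn.
Implicit Types (C : config V) (a b c d e l u v : V).

Let idn_bound := (\max_v idn v).+1.

Let idn_lt_bound v : (idn v < idn_bound)%N.
Proof. by rewrite ltnS leq_bigmax. Qed.

Definition id_key C a : nat := (fsize C a * idn_bound + idn a)%N.

Lemma id_gtE C a b : id_gt idn C a b = (id_key C b < id_key C a)%N.
Proof.
rewrite /id_gt /id_key; have := idn_lt_bound a; have := idn_lt_bound b.
case: (ltngtP (fsize C b) (fsize C a)) => [lt_ba|lt_ab|->] /= lt_b lt_a.
- by have := leq_mul lt_ba (leqnn idn_bound); lia.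
- by have := leq_mul lt_ab (leqnn idn_bound); lia.
- by rewrite ltn_add2l.
Qed.

Lemma id_key_inj C : injective (id_key C).
Proof.
move=> a b /(congr1 (modn^~ idn_bound)); rewrite !modnMDl !modn_small //.
exact: idn_inj.
Qed.

Lemma id_gt_asym C a b : id_gt idn C a b -> ~~ id_gt idn C b a.
Proof. by rewrite !id_gtE -leqNgt => /ltnW. Qed.

Lemma id_gt_fsize C a b : id_gt idn C a b -> (fsize C b <= fsize C a)%N.
Proof. by case/orP=> [/ltnW | /andP[/eqP-> _]]. Qed.

Lemma ext_of_rev C c u v : ext_of adj C c u v -> ext_of adj C (cand C v) v u.
Proof.
by case/and3P=> /eqP<- adj_uv ne_vu; rewrite /ext_of eqxx adj_sym adj_uv eq_sym.
Qed.

Lemma has_extP C c : reflect (has_ext adj C c) [exists u, exists v, ext_of adj C c u v].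
Proof.
apply: (iffP existsP) => [[u /existsP[v ext_uv]] | [u [v ext_uv]]]; exists u.
  by exists v.
by apply/existsP; exists v.
Qed.

Definition neighbor_fragb C c d : bool :=
  [exists u, exists v, ext_of adj C c u v && (cand C v == d)].

Lemma neighbor_fragP C c d : reflect (neighbor_frag adj C c d) (neighbor_fragb C c d).
Proof.
apply: (iffP existsP) => [[u /existsP[v /andP[ext_uv /eqP vd]]] | [u [v [ext_uv vd]]]].
  by exists u, v.
by exists u; apply/existsP; exists v; rewrite ext_uv vd eqxx.
Qed.

Lemma no_ext_owns_all C c :
  cand C c = c -> ~ has_ext adj C c -> forall v, cand C v = c.
Proof.
move=> cand_c no_ext v.
have closed_c : closed adj [pred x | cand C x == c].
  apply: intro_closed; first exact: sym_connect_sym.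
  move=> x y adj_xy /= /eqP cand_x; apply/negPn/negP => ne_y.
  by apply: no_ext; exists x, y; rewrite /ext_of cand_x eqxx adj_xy.
have := closed_connect closed_c (adj_connected c v).
by rewrite !inE cand_c eqxx => /esym/eqP.
Qed.

Record invariant C : Prop := Invariant {
  cand_idem : forall v, cand C (cand C v) = cand C v;
  fsize_le_card : forall c, cand C c = c -> (fsize C c <= #|V|)%N;
  work_all_incoming :
    forall c, cand C c = c -> fst C c = FWork -> all_incoming adj idn C c;
  work_has_ext : forall c, cand C c = c -> fst C c = FWork -> has_ext adj C c;
  leader_owns_all :
    forall l, cand C l = l -> fst C l = FLeader -> forall v, cand C v = l
}.

Lemma invariant_init : invariant (init V).
Proof. by split=> // c _; apply/card_gt0P; exists c. Qed.

Lemma working_not_adjacent C c u v : invariant C ->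
  cand C c = c -> fst C c = FWork -> fst C (cand C v) = FWork ->
  ~ ext_of adj C c u v.
Proof.
move=> inv_C cand_c work_c work_v ext_uv.
have in_c := work_all_incoming inv_C cand_c work_c ext_uv.
have in_v := work_all_incoming inv_C (cand_idem inv_C v) work_v (ext_of_rev ext_uv).
case/and3P: ext_uv => /eqP cand_u _ _; rewrite cand_u in in_v.
by move/negP: (id_gt_asym in_v).
Qed.

Lemma neighbor_frag_candidate C c d :
  invariant C -> neighbor_frag adj C c d -> cand C d = d /\ d != c.
Proof.
by move=> inv_C [u [v [/and3P[_ _ ne_vc] <-]]]; rewrite cand_idem.
Qed.

Lemma neighbor_not_working C c d : invariant C ->
  cand C c = c -> fst C c = FWork -> neighbor_frag adj C c d -> fst C d <> FWork.
Proof.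
move=> inv_C cand_c work_c [u [v [ext_uv <-]]] work_v.
exact: working_not_adjacent inv_C cand_c work_c work_v ext_uv.
Qed.

Lemma working_no_leader C c l : invariant C ->
  cand C c = c -> fst C c = FWork -> cand C l = l -> fst C l = FLeader -> False.
Proof.
move=> inv_C cand_c work_c cand_l lead_l.
have c_l : c = l by rewrite -{1}cand_c (leader_owns_all inv_C cand_l lead_l).
by rewrite c_l lead_l in work_c.
Qed.

Lemma invariant_set_state C c s : invariant C ->
  (s = FWork -> all_incoming adj idn C c /\ has_ext adj C c) ->
  (s = FLeader -> forall v, cand C v = c) ->
  invariant (Config (cand C) (fsize C) (upd (fst C) c s)).
Proof.
case=> idem le_card incoming ext_w owns work_s lead_s.
split=> //= [e cand_e | e cand_e | l cand_l]; rewrite /upd; case: eqP => [-> | _].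
- by case/work_s.
- exact: incoming.
- by case/work_s.
- exact: ext_w.
- exact: lead_s.
- exact: owns.
Qed.

Lemma invariant_grow C c : invariant C -> cand C c = c -> fst C c = FWork ->
  invariant (Config (cand C) (upd (fsize C) c (frag_size C c)) (upd (fst C) c FWait)).
Proof.
move=> inv_C cand_c work_c; case: (inv_C) => idem le_card incoming ext_w owns.
split=> //= [e cand_e | e cand_e | e cand_e | l cand_l];
  rewrite /upd; case: eqP => // /eqP ne_ec.
- exact: max_card.
- exact: le_card.
- move=> work_e u v ext_uv.
  have ne_vc : cand C v != c.
    apply/eqP=> v_c; rewrite -v_c in cand_c work_c.
    exact: working_not_adjacent inv_C cand_e work_e work_c ext_uv.
  by rewrite /id_gt /= /upd (negbTE ne_vc) (negbTE ne_ec); exact: incoming ext_uv.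
- exact: ext_w.
- exact: owns.
Qed.

Lemma ext_of_merge C c d fs st e u v : e != c -> e != d ->
  ext_of adj (Config (fun x => if cand C x == c then d else cand C x) fs st) e u v
  = ext_of adj C e u v.
Proof.
move=> ne_ec ne_ed; rewrite /ext_of /=.
case: (eqVneq (cand C u) c) => [-> | _]; case: (eqVneq (cand C v) c) => [-> | _] //.
all: by rewrite ?[d == e]eq_sym ?[c == e]eq_sym (negbTE ne_ec) ?(negbTE ne_ed).
Qed.

Lemma invariant_join C c d : invariant C -> cand C c = c -> fst C c = FWork ->
  neighbor_frag adj C c d ->
  invariant (Config (fun x => if cand C x == c then d else cand C x) (fsize C) (fst C)).
Proof.
move=> inv_C cand_c work_c nbr_cd; case: (inv_C) => idem le_card incoming ext_w owns.
have [cand_d ne_dc] := neighbor_frag_candidate inv_C nbr_cd.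
have work_ne_d e : fst C e = FWork -> e != d.
  move=> work_e; apply: contraPneq (neighbor_not_working inv_C cand_c work_c nbr_cd).
  by move=> <-.
have merged_cand e : (if cand C e == c then d else cand C e) = e ->
    cand C e = e /\ (cand C e != c).
  case: (eqVneq (cand C e) c) => [cand_e d_e | //].
  by rewrite -d_e cand_d in cand_e; rewrite cand_e eqxx in ne_dc.
split=> /= [v | e /merged_cand[cand_e _] | e /merged_cand[cand_e ne_ec] work_e
           | e /merged_cand[cand_e ne_ec] work_e | l /merged_cand[cand_l _] lead_l].
- case: (eqVneq (cand C v) c) => [_ | ne_vc]; first by rewrite cand_d (negbTE ne_dc).
  by rewrite idem (negbTE ne_vc).
- exact: le_card.
- rewrite cand_e in ne_ec.
  move=> u v; rewrite ext_of_merge ?work_ne_d // => ext_uv.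
  have ne_vc : cand C v != c.
    apply/eqP=> v_c; rewrite -v_c in cand_c work_c.
    exact: working_not_adjacent inv_C cand_e work_e work_c ext_uv.
  by rewrite /id_gt /= (negbTE ne_vc); exact: incoming ext_uv.
- rewrite cand_e in ne_ec.
  have [u [v ext_uv]] := ext_w e cand_e work_e.
  by exists u, v; rewrite ext_of_merge ?work_ne_d.
- by case: (working_no_leader inv_C cand_c work_c cand_l lead_l).
Qed.

Variables (R : realFieldType) (X : R).

Lemma invariant_step C C' : invariant C -> step adj idn X C C' -> invariant C'.
Proof.
move=> inv_C; case=> [c cand_c _ ext_c in_c | c cand_c _ no_ext
                    | c d cand_c work_c _ _ | c d cand_c work_c [nbr_cd _] _].
- exact: invariant_set_state.
- by apply: invariant_set_state => // _; exact: no_ext_owns_all.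
- exact: invariant_grow.
- exact: invariant_join.
Qed.

Lemma reachable_invariant C : reachable adj idn X C -> invariant C.
Proof.
by elim=> [|C1 C2 _ inv_C1 /(invariant_step inv_C1)]; first exact: invariant_init.
Qed.

Definition wait_bit (s : fstate) : nat := if s is FWait then 1 else 0.

Definition size_bound : nat := #|V|.+1.

Definition frag_weight C v : nat :=
  if cand C v == v then (2 * (size_bound - fsize C v) + wait_bit (fst C v))%N else 0.

Definition potential C : nat := \sum_v frag_weight C v.

Lemma potential_set_state C c s :
  cand C c = c -> fst C c = FWait -> wait_bit s = 0 ->
  (potential (Config (cand C) (fsize C) (upd (fst C) c s)) < potential C)%N.
Proof.
move=> cand_c wait_c s_busy; apply: (sum_ltn (i0 := c)) => [v |].
  rewrite /frag_weight /= /upd; case: (eqVneq v c) => [-> | //].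
  by rewrite cand_c eqxx wait_c s_busy /=; lia.
by rewrite /frag_weight /= /upd eqxx cand_c eqxx wait_c s_busy /=; lia.
Qed.

Lemma frag_size_lt_bound C c : (frag_size C c < size_bound)%N.
Proof. by rewrite ltnS max_card. Qed.

Lemma potential_grow C c : cand C c = c -> fst C c = FWork ->
  (fsize C c < frag_size C c)%N ->
  (potential (Config (cand C) (upd (fsize C) c (frag_size C c)) (upd (fst C) c FWait))
   < potential C)%N.
Proof.
move=> cand_c work_c grows; have lt_bound := frag_size_lt_bound C c.
apply: (sum_ltn (i0 := c)) => [v |]; rewrite /frag_weight /= /upd.
  by case: (eqVneq v c) => [-> | //]; rewrite cand_c eqxx work_c /=; lia.
by rewrite eqxx cand_c eqxx work_c /=; lia.
Qed.

Lemma potential_join C c d : invariant C -> cand C c = c -> fst C c = FWork ->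
  neighbor_frag adj C c d ->
  (potential (Config (fun x => if cand C x == c then d else cand C x) (fsize C) (fst C))
   < potential C)%N.
Proof.
move=> inv_C cand_c work_c nbr_cd.
have [cand_d ne_dc] := neighbor_frag_candidate inv_C nbr_cd.
apply: (sum_ltn (i0 := c)) => [v |]; rewrite /frag_weight /=.
  case: (eqVneq (cand C v) c) => [_ | //].
  by case: eqVneq => [<- | //]; rewrite cand_d eqxx.
rewrite cand_c eqxx (negbTE ne_dc) work_c.
have lt_bound : (fsize C c < size_bound)%N by rewrite ltnS fsize_le_card.
lia.
Qed.

Hypothesis X_gt1 : 1 < X.

Lemma fsize_lt_grown C c d : invariant C -> cand C c = c -> fst C c = FWork ->
  max_neighbor adj idn C c d -> X * (fsize C d)%:R < (frag_size C c)%:R ->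
  (fsize C c < frag_size C c)%N.
Proof.
move=> inv_C cand_c work_c [[u [v [ext_uv <-]]] _] grows.
have le_cv := id_gt_fsize (work_all_incoming inv_C cand_c work_c ext_uv).
rewrite -(ltr_nat R); apply: le_lt_trans grows.
by rewrite (le_trans _ (ler_peMl (ler0n _ _) (ltW X_gt1))) // ler_nat.
Qed.

Lemma potential_step C C' : invariant C -> step adj idn X C C' ->
  (potential C' < potential C)%N.
Proof.
move=> inv_C; case=> [c cand_c wait_c _ _ | c cand_c wait_c _
                    | c d cand_c work_c max_cd grows | c d cand_c work_c [nbr_cd _] _].
- exact: potential_set_state.
- exact: potential_set_state.
- exact/potential_grow/(fsize_lt_grown inv_C cand_c work_c max_cd grows).
- exact: potential_join.
Qed.

Lemma max_neighbor_exists C c : has_ext adj C c -> exists d, max_neighbor adj idn C c d.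
Proof.
case=> u [v ext_uv].
have nbr_v : neighbor_fragb C c (cand C v) by apply/neighbor_fragP; exists u, v.
have [d /neighbor_fragP nbr_d d_max] := arg_maxnP (id_key C) nbr_v.
exists d; split => // e /neighbor_fragP/d_max.
rewrite /= leq_eqVlt => /orP[/eqP/id_key_inj-> | lt_ed]; first by left.
by right; rewrite id_gtE.
Qed.

Lemma min_candidate_all_incoming C (v0 : V) : invariant C ->
  exists2 m, cand C m = m & all_incoming adj idn C m.
Proof.
move=> inv_C.
have cand_v0 : cand C (cand C v0) == cand C v0 by rewrite cand_idem.
have [m /eqP cand_m m_min] := arg_minnP (P := fun x => cand C x == x) (id_key C) cand_v0.
exists m => // u v /and3P[/eqP cand_u _ ne_vm]; rewrite id_gtE.
by rewrite ltn_neqAle (inj_eq (@id_key_inj C)) eq_sym ne_vm m_min //= cand_idem.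
Qed.

Lemma candidate_can_step C c : invariant C -> cand C c = c ->
  all_incoming adj idn C c -> fst C c <> FLeader -> exists C', step adj idn X C C'.
Proof.
move=> inv_C cand_c in_c; case st_c: (fst C c) => // _.
  case: (has_extP C c) => ext_c; eexists.
    exact: StartWork cand_c st_c ext_c in_c.
  exact: BecomeLeader cand_c st_c ext_c.
have [d max_cd] := max_neighbor_exists (work_has_ext inv_C cand_c st_c).
case: (boolP (X * (fsize C d)%:R < (frag_size C c)%:R)) => grows; eexists.
  exact: FinishGrow cand_c st_c max_cd grows.
exact: FinishJoin cand_c st_c max_cd (negP grows).
Qed.

Lemma terminal_leader C (v0 : V) : invariant C -> terminal adj idn X C ->
  exists l, cand C l = l /\ fst C l = FLeader.
Proof.
move=> inv_C term_C; have [m cand_m in_m] := min_candidate_all_incoming v0 inv_C.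
exists m; split => //; case lead_m: (fst C m) => //.
all: by case: (candidate_can_step inv_C cand_m in_m) => [|C' /term_C]; rewrite ?lead_m.
Qed.

End Election.

Theorem theorem2 (V : finType) (adj : rel V) (idn : V -> nat)
    (R : realFieldType) (X : R) :
  symmetric adj -> irreflexive adj -> (forall x y : V, connect adj x y) ->
  injective idn -> 1 < X -> (0 < #|V|)%N ->
  (* termination: there is no infinite execution *)
  (~ exists f : nat -> config V,
       f 0%N = init V /\ forall k, step adj idn X (f k) (f k.+1)) /\
  (* every execution that cannot be extended ends with exactly one leader *)
  (forall C, reachable adj idn X C -> terminal adj idn X C ->
     exists! l : V, cand C l = l /\ fst C l = FLeader).
Proof.
move=> adj_sym _ adj_conn idn_inj X_gt1 /card_gt0P[v0 _].
have reach_inv C : reachable adj idn X C -> invariant adj idn C.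
  exact: reachable_invariant.
split.
  case=> f [f0 f_step].
  have f_reach k : reachable adj idn X (f k).
    by elim: k => [|k IHk]; [rewrite f0; exact: reach0 | exact: reachS IHk (f_step k)].
  case: (@no_infinite_descent (fun k => potential (f k))) => k.
  exact: (potential_step X_gt1 (reach_inv _ (f_reach k)) (f_step k)).
move=> C reach_C term_C; have inv_C := reach_inv C reach_C.
have [l [cand_l lead_l]] := terminal_leader idn_inj v0 inv_C term_C.
exists l; split => // l' [cand_l' lead_l'].
by rewrite -(leader_owns_all inv_C cand_l' lead_l' l) cand_l.
Qed.
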